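(* Let $W:\mathrm{cont}^+(\mathbb{T},\xi_0)\to\mathbb{R}$ be a positive function that is positively 1-homogeneous and invariant under the adjoint action of $\mathrm{Cont}(\mathbb{T},\xi_0)=\mathrm{Diff}_0(\mathbb{T})$. Then there exists $c>0$ such that $W=cV$. In particular, $V$ is, up to rescaling, the unique bi-invariant Lorentz--Finsler metric on $(\mathrm{Cont}(\mathbb{T},\xi_0),\mathrm{cont}^+(\mathbb{T},\xi_0))$.
   Context: $\mathbb{T}=\mathbb{R}/\mathbb{Z}$ with trivial contact structure $\xi_0=\{0\}$ co-oriented by the standard orientation; $\mathrm{Diff}_0(\mathbb{T})$ is the group of orientation-preserving diffeomorphisms, acting on vector fields by push-forward $X\mapsto\phi_*X$ (the adjoint action). $\mathrm{cont}^+(\mathbb{T},\xi_0)$ is the set of vector fields $H\,\partial_x$ with $H>0$. $V(H\partial_x)=\left(\int_0^1\frac{\mathrm{d}x}{H(x)}\right)^{-1}$. A bi-invariant Lorentz--Finsler metric on the cone $\mathrm{cont}^+$ is a positive, positively 1-homogeneous, adjoint-invariant function on it that is smooth, strongly concave in non-radial directions, and extends continuously by $0$ to the boundary of the cone. *)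

From Stdlib Require Import Reals.
From Coquelicot Require Import Coquelicot.
Open Scope R_scope.

Definition smooth (f : R -> R) : Prop := forall (n : nat) (x : R), ex_derive_n f n x.

(* A vector field H d/dx on T = R/Z is identified with a smooth 1-periodic H. *)
Definition periodic1 (f : R -> R) : Prop := forall x, f (x + 1) = f x.

(* cont^+(T, xi_0): vector fields H d/dx with H > 0. *)
Definition cont_pos (H : R -> R) : Prop :=
  smooth H /\ periodic1 H /\ forall x, 0 < H x.

(* Diff_0(T): orientation-preserving diffeomorphisms of T, given by their
   lifts phi : R -> R, smooth, phi(x+1) = phi(x) + 1, phi' > 0. *)
Definition diff0_lift (phi : R -> R) : Prop :=
  smooth phi /\ (forall x, phi (x + 1) = phi x + 1) /\ (forall x, 0 < Derive phi x).

Definition pushforward (phi H G : R -> R) : Prop :=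
  forall x, G (phi x) = Derive phi x * H x.

Definition V (H : R -> R) : R := / RInt (fun x => / H x) 0 1.

(* Every positive vector field H d/dx on the circle is conjugate to a constant
   one: the lift phi(x) = (int_0^x dt/H) / (int_0^1 dt/H) of an orientation-
   preserving diffeomorphism satisfies phi' H = V(H).  Invariance and
   homogeneity of W then give W(H) = W(V(H) * 1) = V(H) W(1). *)

From Stdlib Require Import Reals Lra.
From Coquelicot Require Import Coquelicot.
Open Scope R_scope.

Fixpoint Ck (n : nat) (f : R -> R) : Prop :=
  match n with
  | O => True
  | S m => (forall x, ex_derive f x) /\ Ck m (Derive f)
  end.

Lemma Ck_ext n : forall f g, (forall x, f x = g x) -> Ck n f -> Ck n g.
Proof.
induction n as [|n IH]; simpl; auto.
intros f g E [D C]; split.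
- intros x; apply ex_derive_ext with f; auto.
- apply IH with (Derive f); auto. intros x; apply Derive_ext; auto.
Qed.

Lemma Ck_S n : forall f, Ck (S n) f -> Ck n f.
Proof.
induction n as [|n IH]; simpl; auto.
intros f [D [D1 C]]; split; auto. apply IH. simpl; auto.
Qed.

Lemma Ck_const n : forall c, Ck n (fun _ => c).
Proof.
induction n as [|n IH]; intros c; simpl; auto. split.
- intros; apply ex_derive_const.
- apply Ck_ext with (fun _ => 0); auto. intros; rewrite Derive_const; auto.
Qed.

Lemma Ck_plus n : forall f g, Ck n f -> Ck n g -> Ck n (fun x => f x + g x).
Proof.
induction n as [|n IH]; intros f g; simpl; auto.
intros [Df Cf] [Dg Cg]; split.
- intros x; exact (ex_derive_plus f g x (Df x) (Dg x)).
- apply Ck_ext with (fun x => Derive f x + Derive g x).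
  + intros x; rewrite Derive_plus; auto.
  + apply IH; auto.
Qed.

Lemma Ck_mult n : forall f g, Ck n f -> Ck n g -> Ck n (fun x => f x * g x).
Proof.
induction n as [|n IH]; intros f g; simpl; auto.
intros Cf Cg. pose proof (Ck_S n f Cf) as Cf'. pose proof (Ck_S n g Cg) as Cg'.
destruct Cf as [Df Cf]; destruct Cg as [Dg Cg]; split.
- intros x; exact (ex_derive_mult f g x (Df x) (Dg x)).
- apply Ck_ext with (fun x => Derive f x * g x + f x * Derive g x).
  + intros x; rewrite Derive_mult; auto.
  + apply Ck_plus; apply IH; auto.
Qed.

(* The induction needs the bounded order [n]: the derivative of [1/f] is
   [-f' (1/f)^2], which is only known to be [C^n] once [1/f] is. *)
Lemma Ck_inv n : forall f, Ck n f -> (forall x, f x <> 0) -> Ck n (fun x => / f x).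
Proof.
induction n as [|n IH]; intros f; simpl; auto.
intros Cf N. pose proof (Ck_S n f Cf) as Cf'.
destruct Cf as [Df Cf]; split.
- intros x; apply ex_derive_inv; auto.
- apply Ck_ext with (fun x => (-1) * Derive f x * (/ f x * / f x)).
  + intros x; rewrite Derive_inv; auto. specialize (N x). field. auto.
  + apply Ck_mult; [apply Ck_mult|apply Ck_mult]; auto. apply Ck_const.
Qed.

Lemma Derive_n_Derive n : forall f x, Derive_n (Derive f) n x = Derive_n f (S n) x.
Proof.
induction n as [|n IH]; intros f x; simpl; auto.
apply Derive_ext; intros t; apply IH.
Qed.

Lemma Ck_ex_derive_n n : forall f, Ck n f -> forall x, ex_derive_n f n x.
Proof.
induction n as [|n IH]; intros f C x; simpl; auto.
destruct C as [D C]. destruct n as [|m]; simpl; auto.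
apply ex_derive_ext with (Derive_n (Derive f) m).
- intros t; apply Derive_n_Derive.
- apply (IH _ C x).
Qed.

Lemma smooth_Derive f : smooth f -> smooth (Derive f).
Proof.
intros Sm n x. destruct n as [|m]; simpl; auto.
apply ex_derive_ext with (Derive_n f (S m)).
- intros t; symmetry; apply Derive_n_Derive.
- apply (Sm (S (S m)) x).
Qed.

Lemma smooth_Ck f : smooth f <-> forall n, Ck n f.
Proof.
split.
- intros Sm n; revert f Sm; induction n as [|n IH]; intros f Sm; simpl; auto.
  split.
  + intros x; apply (Sm 1%nat x).
  + apply IH; apply smooth_Derive; auto.
- intros C n x; apply Ck_ex_derive_n; auto.
Qed.

Lemma smooth_const c : smooth (fun _ => c).
Proof. intros n x; apply ex_derive_n_const. Qed.

Lemma smooth_scal_r f c : smooth f -> smooth (fun x => f x * c).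
Proof. intros Sf n x; apply ex_derive_n_scal_r, Sf. Qed.

Lemma smooth_inv f : smooth f -> (forall x, f x <> 0) -> smooth (fun x => / f x).
Proof.
rewrite !smooth_Ck; intros Sf N n; apply Ck_inv; auto.
Qed.

Lemma smooth_antiderivative f g :
  (forall x, is_derive f x (g x)) -> smooth g -> smooth f.
Proof.
intros Df Sg [|[|n]] x.
- exact I.
- exists (g x); apply Df.
- apply ex_derive_ext with (Derive_n g n).
  + intros t. rewrite <- Derive_n_Derive.
    apply Derive_n_ext; intros u; symmetry; apply is_derive_unique, Df.
  + apply (Sg (S n) x).
Qed.

Lemma is_derive_0_const (f : R -> R) :
  (forall x, is_derive f x 0) -> forall x y, f x = f y.
Proof.
intros Df x y.
pose proof (is_RInt_derive f (fun _ => 0) y x (fun t _ => Df t)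
  (fun t _ => continuous_const 0 t)) as P.
apply is_RInt_unique in P; rewrite RInt_const in P.
unfold scal, minus, plus, opp in P; simpl in P; unfold mult in P; simpl in P.
lra.
Qed.

Lemma antiderivative_periodic_shift (f g : R -> R) :
  (forall x, is_derive f x (g x)) -> periodic1 g ->
  forall x, f (x + 1) = f x + (f 1 - f 0).
Proof.
intros Df Pg x.
assert (Dshift : forall y, is_derive (fun t => f (t + 1) - f t) y 0).
{ intros y. auto_derive.
  - split; [exists (g (y + 1))|split; [exists (g y)|]]; auto.
  - rewrite !(is_derive_unique f _ _ (Df _)), Pg. ring. }
pose proof (is_derive_0_const _ Dshift x 0) as E.
simpl in E; rewrite Rplus_0_l in E; lra.
Qed.

Definition normalized_primitive (g : R -> R) (x : R) : R := RInt g 0 x / RInt g 0 1.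

Section NormalizedPrimitive.

Variable g : R -> R.
Hypothesis g_smooth : smooth g.
Hypothesis g_periodic : periodic1 g.
Hypothesis g_pos : forall x, 0 < g x.

Lemma smooth_continuous x : continuous g x.
Proof. exact (ex_derive_continuous g x (g_smooth 1%nat x)). Qed.

Lemma RInt_period_pos : 0 < RInt g 0 1.
Proof.
apply RInt_gt_0; [lra| |]; intros x _; auto using smooth_continuous.
Qed.

Lemma is_derive_primitive x : is_derive (fun y => RInt g 0 y) x (g x).
Proof.
apply is_derive_RInt with 0; auto using smooth_continuous.
apply filter_forall; intros y; apply RInt_correct.
apply (ex_RInt_continuous (V := R_CompleteNormedModule)); auto using smooth_continuous.
Qed.

Lemma is_derive_normalized_primitive x :
  is_derive (normalized_primitive g) x (g x / RInt g 0 1).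
Proof. exact (is_derive_scal_l _ x _ (/ RInt g 0 1) (is_derive_primitive x)). Qed.

Lemma normalized_primitive_diff0_lift : diff0_lift (normalized_primitive g).
Proof.
pose proof RInt_period_pos as Ipos.
split; [|split].
- apply smooth_antiderivative with (fun x => g x / RInt g 0 1).
  + apply is_derive_normalized_primitive.
  + apply smooth_scal_r, g_smooth.
- intros x. rewrite (antiderivative_periodic_shift _ _ is_derive_normalized_primitive).
  + unfold normalized_primitive. rewrite RInt_point. unfold zero; simpl. field. lra.
  + intros y; unfold Rdiv; rewrite g_periodic; auto.
- intros x. rewrite (is_derive_unique _ _ _ (is_derive_normalized_primitive x)).
  apply Rdiv_lt_0_compat; auto.
Qed.

End NormalizedPrimitive.

Lemma cont_pos_const c : 0 < c -> cont_pos (fun _ => c).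
Proof. intros Hc; split; [apply smooth_const|split; intros x; auto]. Qed.

Lemma cont_pos_inv H : cont_pos H -> cont_pos (fun x => / H x).
Proof.
intros [SH [PH PosH]]; split; [|split].
- apply smooth_inv; auto. intros x; specialize (PosH x); lra.
- intros x; rewrite PH; auto.
- intros x; apply Rinv_0_lt_compat; auto.
Qed.

Lemma V_pos H : cont_pos H -> 0 < V H.
Proof.
intros CH; apply Rinv_0_lt_compat.
destruct (cont_pos_inv H CH) as [S [P Pos]]; apply RInt_period_pos; auto.
Qed.

Lemma cont_pos_conjugate_const H : cont_pos H ->
  exists phi, diff0_lift phi /\ pushforward phi H (fun _ => V H).
Proof.
intros CH. pose proof (cont_pos_inv H CH) as [S [P Pos]].
pose proof (RInt_period_pos _ S Pos) as Ipos.
exists (normalized_primitive (fun x => / H x)); split.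
- apply normalized_primitive_diff0_lift; auto.
- intros x. rewrite (is_derive_unique _ _ _ (is_derive_normalized_primitive _ S x)).
  destruct CH as [_ [_ PosH]]; specialize (PosH x).
  unfold V. field. lra.
Qed.

Theorem proposition3p1 (W : (R -> R) -> R) :
  (forall H, cont_pos H -> 0 < W H) ->
  (forall H (c : R), cont_pos H -> 0 < c -> W (fun x => c * H x) = c * W H) ->
  (forall phi H G, diff0_lift phi -> cont_pos H -> pushforward phi H G -> W G = W H) ->
  exists c : R, 0 < c /\ forall H, cont_pos H -> W H = c * V H.
Proof.
intros Wpos Whom Winv.
pose proof (cont_pos_const 1 Rlt_0_1) as C1.
exists (W (fun _ => 1)); split; [apply Wpos; auto|].
intros H CH.
destruct (cont_pos_conjugate_const H CH) as [phi [Dphi Push]].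
assert (E : W (fun _ => V H * 1) = W H).
{ apply Winv with phi; auto. intros x; rewrite Rmult_1_r; apply Push. }
rewrite <- E, Whom; auto using V_pos. ring.
Qed.
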